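(* Fix a general instance satisfying the unique-default-action assumption, with relevant-action tie-breaking, and a true bias $\alpha^\star\in(0,1]$. Suppose there is a true-bias optimal scheme $\tau^\star$ with $P_{\rm info}^{\alpha^\star}(\tau^\star)=0$. Then there exists $\delta>0$ such that for every interval $J\subseteq(0,1]$ with $\alpha^\star\in J$ and $|J|\le\delta$: - every atom $(p_i,\nu_i,a_i)$ of $\tau^\star$ with $p_i>0$ satisfies $\nu_i\in R_{a_i}^J$; - $\tau^\star$ attains the interval-safe optimum, so that $\mathrm{OPT}^{\rm safe}(J)=\mathrm{OPT}(\alpha^\star)$.
   Context: General model: finite $\Omega$, $A$, full-support prior $\mu_0$, utilities $u_S,u_R$, and $\Delta u_{a,a'}(\omega)=u_R(a,\omega)-u_R(a',\omega)$. A receiver with bias $\alpha$ best-responds to $(1-\alpha)\mu_0+\alpha\nu$. Action regions. For $\alpha\in(0,1]$: $b_{a,a'}(\alpha)=\frac{\alpha-1}{\alpha}\Delta u_{a,a'}^\top\mu_0$ and $R_a^\alpha=\{\nu\in\Delta(\Omega):\Delta u_{a,a'}^\top\nu\ge b_{a,a'}(\alpha)\ \forall a'\neq a\}$. For $J=[\underline\alpha,\overline\alpha]\subseteq(0,1]$: $b_{a,a'}(J)=\max\{b_{a,a'}(\underline\alpha),b_{a,a'}(\overline\alpha)\}$, $R_a^J$ is defined as $R_a^\alpha$ with $b_{a,a'}(J)$, and $\mathrm{int}_{IC}(R_a^J)$ uses strict inequalities. Relevant actions: $A_{\rm rel}$ is the set of actions that are the unique receiver best response at $\alpha^\star$ for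 some posterior. Tie-breaking: never outside $A_{\rm rel}$, and sender-favorable among relevant ties. Unique default action $a_0$ at the prior. Schemes. A scheme is a finite list of triples $(p_i,\nu_i,a_i)$ with $\sum p_i=1$, $p_i\ge0$, $\sum p_i\nu_i=\mu_0$, and value $\sum_i p_i\sum_\omega\nu_i(\omega)u_S(a_i,\omega)$. - $\mathrm{OPT}(\alpha^\star)$ is the supremum of values over schemes with $a_i\in A_{\rm rel}$ and $\nu_i\in R_{a_i}^{\alpha^\star}$; a true-bias optimal scheme attains it. - $\mathrm{OPT}^{\rm safe}(J)$ is the supremum over schemes with $\nu_i\in R_{a_i}^J$ and $\mathrm{int}_{IC}(R_{a_i}^J)\ne\emptyset$. Informative mass. A pair $(a,a')$ is movable if $\Delta u_{a,a'}^\top\mu_0\neq0$. $P^{\alpha^\star}_{\rm info}(\tau)$ is the total mass of atoms with $\Delta u_{a_i,a'}^\top\nu_i=b_{a_i,a'}(\alpha^\star)$ for some movable pair $(a_i,a')$. *)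

From HB Require Import structures.
From mathcomp Require Import all_boot all_order all_algebra.
From mathcomp Require Import boolp classical_sets reals.

Set Implicit Arguments.
Unset Strict Implicit.
Unset Printing Implicit Defensive.

Import Order.TTheory GRing.Theory Num.Theory.
Local Open Scope ring_scope.
Local Open Scope classical_set_scope.

Record atom (R : Type) (Om A : Type) := Atom {
  pr : R;
  post : Om -> R;
  act : A
}.

Fixpoint allProp (T : Type) (P : T -> Prop) (s : seq T) : Prop :=
  match s with
  | [::] => True
  | x :: s' => P x /\ allProp P s'
  end.

Section Model.
Variables (R : realType) (Om A : finType).

Definition dot (f g : Om -> R) : R := \sum_(w : Om) f w * g w.

Definition simplex (nu : Om -> R) : Prop :=
  (forall w, 0 <= nu w) /\ \sum_(w : Om) nu w = 1.

Definition full_support_prior (mu0 : Om -> R) : Prop :=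
  (forall w, 0 < mu0 w) /\ \sum_(w : Om) mu0 w = 1.

Variables (uR : A -> Om -> R) (mu0 : Om -> R).

Definition du (a a' : A) : Om -> R := fun w => uR a w - uR a' w.

Definition unique_BR (q : Om -> R) (a : A) : Prop :=
  forall a', a' != a -> dot q (uR a') < dot q (uR a).

Definition unique_default : Prop := exists a0 : A, unique_BR mu0 a0.

Definition belief (alpha : R) (nu : Om -> R) : Om -> R :=
  fun w => (1 - alpha) * mu0 w + alpha * nu w.

Definition A_rel (alpha : R) (a : A) : Prop :=
  exists nu, simplex nu /\ unique_BR (belief alpha nu) a.

Definition bnd (a a' : A) (alpha : R) : R :=
  (alpha - 1) / alpha * dot (du a a') mu0.

Definition region (alpha : R) (a : A) (nu : Om -> R) : Prop :=
  simplex nu /\ forall a', a' != a -> bnd a a' alpha <= dot (du a a') nu.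

Definition bndJ (a a' : A) (lo hi : R) : R :=
  Num.max (bnd a a' lo) (bnd a a' hi).

Definition regionJ (lo hi : R) (a : A) (nu : Om -> R) : Prop :=
  simplex nu /\ forall a', a' != a -> bndJ a a' lo hi <= dot (du a a') nu.

Definition intIC (lo hi : R) (a : A) (nu : Om -> R) : Prop :=
  simplex nu /\ forall a', a' != a -> bndJ a a' lo hi < dot (du a a') nu.

Definition is_scheme (tau : seq (atom R Om A)) : Prop :=
  allProp (fun t => 0 <= pr t) tau /\
  \sum_(t <- tau) pr t = 1 /\
  (forall w, \sum_(t <- tau) pr t * post t w = mu0 w).

Variable uS : A -> Om -> R.

Definition value (tau : seq (atom R Om A)) : R :=
  \sum_(t <- tau) pr t * dot (post t) (uS (act t)).

(* feasibility for OPT(alpha) (relevant-action tie-breaking) *)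
Definition feasible_true (alpha : R) (tau : seq (atom R Om A)) : Prop :=
  is_scheme tau /\
  allProp (fun t => A_rel alpha (act t) /\ region alpha (act t) (post t)) tau.

Definition OPT (alpha : R) : R :=
  sup [set v | exists tau, feasible_true alpha tau /\ v = value tau].

Definition true_bias_optimal (alpha : R) (tau : seq (atom R Om A)) : Prop :=
  feasible_true alpha tau /\ value tau = OPT alpha.

Definition feasible_safe (lo hi : R) (tau : seq (atom R Om A)) : Prop :=
  is_scheme tau /\
  allProp (fun t => regionJ lo hi (act t) (post t) /\
                 exists nu, intIC lo hi (act t) nu) tau.

Definition OPT_safe (lo hi : R) : R :=
  sup [set v | exists tau, feasible_safe lo hi tau /\ v = value tau].

Definition movable (a a' : A) : bool := dot (du a a') mu0 != 0.

Definition P_info (alpha : R) (tau : seq (atom R Om A)) : R :=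
  \sum_(t <- tau | [exists a' : A, (a' != act t) && movable (act t) a'
                      && (dot (du (act t) a') (post t) == bnd (act t) a' alpha)])
     pr t.

End Model.

From HB Require Import structures.
From mathcomp Require Import all_boot all_order all_algebra.
From mathcomp Require Import boolp classical_sets reals.
From mathcomp Require Import ring lra.
Import Order.TTheory GRing.Theory Num.Theory.
Local Open Scope ring_scope.
Set Implicit Arguments.
Unset Strict Implicit.

(* Write b_{a,a'}(α) = c - c/α with c = Δu_{a,a'}ᵀμ₀: for fixed c it is continuous
   and monotone in α.  Since P_info(τ⋆) = 0, every atom of positive weight meets its
   movable constraints at α⋆ with slack, while a non-movable constraint has bound 0
   for every α; relevance of a_i at α⋆ provides a posterior meeting all its
   constraints strictly.  Continuity keeps these strict inequalities on every short
   enough interval J around α⋆, so τ⋆ with its null atoms dropped is interval-safe.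
   Monotonicity gives b(α⋆) <= b(J), so every interval-safe scheme is feasible at α⋆,
   whence OPT^safe(J) <= OPT(α⋆) = value(τ⋆) <= OPT^safe(J). *)

Section AllProp.
Variable T : Type.

Lemma allProp_impl (P Q : T -> Prop) s :
  (forall x, P x -> Q x) -> allProp P s -> allProp Q s.
Proof. by move=> PQ; elim: s => //= x s IH [/PQ Qx /IH]. Qed.

Lemma allProp_and (P Q : T -> Prop) s :
  allProp P s -> allProp Q s -> allProp (fun x => P x /\ Q x) s.
Proof. by elim: s => //= x s IH [Px Ps] [Qx Qs]; split; last exact: IH. Qed.

Lemma allProp_filter (p : pred T) (Q : T -> Prop) s :
  allProp (fun x => p x -> Q x) s -> allProp Q [seq x <- s | p x].
Proof. by elim: s => //= x s IH [Qx /IH Qs]; case: ifP => //= /Qx. Qed.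

Lemma eq_big_allProp (R : Type) (idx : R) (op : R -> R -> R) (F G : T -> R) s :
  allProp (fun x => F x = G x) s ->
  \big[op/idx]_(x <- s) F x = \big[op/idx]_(x <- s) G x.
Proof. by elim: s => [|x s IH] /= => [_|[FGx /IH]]; rewrite ?big_nil // !big_cons FGx => ->. Qed.

End AllProp.

Lemma allProp_mem (T : eqType) (P : T -> Prop) s :
  allProp P s <-> (forall x, x \in s -> P x).
Proof.
elim: s => [|y s IH] /=; first by split=> // _ x; rewrite in_nil.
split=> [[Py /IH Ps] x|Ps]; first by rewrite in_cons => /orP[/eqP->|/Ps].
by split; [apply: Ps; rewrite mem_head | apply/IH => x xs; apply: Ps; rewrite in_cons xs orbT].
Qed.

Section ListSums.
Variables (R : numDomainType) (T : Type).

Lemma sumr_allProp_ge0 (P : pred T) (F : T -> R) s :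
  allProp (fun x => 0 <= F x) s -> 0 <= \sum_(x <- s | P x) F x.
Proof.
elim: s => [|x s IH] /= => [_|[Fx /IH Fs]]; rewrite ?big_nil // big_cons.
by case: (P x) => //; rewrite addr_ge0.
Qed.

Lemma psumr_eq0_allProp (P : pred T) (F : T -> R) s :
  allProp (fun x => 0 <= F x) s -> \sum_(x <- s | P x) F x = 0 ->
  allProp (fun x => P x -> F x = 0) s.
Proof.
elim: s => [|x s IH] //= [Fx Fs]; rewrite big_cons.
have Ss := sumr_allProp_ge0 P Fs.
case: (P x) => [/eqP|/(IH Fs)]; last by split.
by rewrite paddr_eq0 // => /andP[/eqP F0 /eqP/(IH Fs)].
Qed.

Lemma sum_filter_eq (p : pred T) (F : T -> R) s :
  allProp (fun x => ~~ p x -> F x = 0) s ->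
  \sum_(x <- [seq x <- s | p x]) F x = \sum_(x <- s) F x.
Proof.
move=> F0; rewrite big_filter big_mkcond; apply: eq_big_allProp.
by apply: allProp_impl F0 => x; case: (p x) => // ->.
Qed.

End ListSums.

Section ShortIntervals.
Variable R : realFieldType.

Definition short_intervals (a : R) (Q : R -> R -> Prop) : Prop :=
  exists2 d, 0 < d &
    forall lo hi, 0 < lo -> lo <= a -> a <= hi -> hi - lo <= d -> Q lo hi.

Variable a : R.

Lemma short_intervalsT (Q : R -> R -> Prop) :
  (forall lo hi, Q lo hi) -> short_intervals a Q.
Proof. by move=> Q_all; exists 1. Qed.

Lemma short_intervalsS (Q Q' : R -> R -> Prop) :
  (forall lo hi, Q lo hi -> Q' lo hi) -> short_intervals a Q -> short_intervals a Q'.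
Proof. by move=> QQ' [d d_gt0 Qd]; exists d => // lo hi *; apply/QQ'/Qd. Qed.

Lemma short_intervalsI (Q Q' : R -> R -> Prop) :
  short_intervals a Q -> short_intervals a Q' ->
  short_intervals a (fun lo hi => Q lo hi /\ Q' lo hi).
Proof.
move=> [d d_gt0 Qd] [d' d'_gt0 Q'd']; exists (Num.min d d'); first by rewrite lt_min d_gt0.
by move=> lo hi lo0 loa ahi; rewrite le_min => /andP[? ?]; split; [apply: Qd | apply: Q'd'].
Qed.

Lemma short_intervals_allProp (T : Type) (Q : T -> R -> R -> Prop) s :
  allProp (fun x => short_intervals a (Q x)) s ->
  short_intervals a (fun lo hi => allProp (fun x => Q x lo hi) s).
Proof.
elim: s => [|x s IH] /= => [_|[Qx /IH Qs]]; first exact: short_intervalsT.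
exact: short_intervalsI.
Qed.

Lemma short_intervals_forall (T : finType) (Q : T -> R -> R -> Prop) :
  (forall x, short_intervals a (Q x)) ->
  short_intervals a (fun lo hi => forall x, Q x lo hi).
Proof.
move=> Qx; have /short_intervals_allProp : allProp (fun x => short_intervals a (Q x)) (enum T).
  by apply/allProp_mem.
by apply: short_intervalsS => lo hi /allProp_mem Qe x; apply: Qe; rewrite mem_enum.
Qed.

Lemma short_intervals_near (P : R -> Prop) :
  (exists2 d, 0 < d & forall b, 0 < b -> `|b - a| <= d -> P b) ->
  short_intervals a (fun lo hi => P lo /\ P hi).
Proof.
move=> [d d_gt0 Pd]; exists d => // lo hi lo0 loa ahi hd.
split; apply: Pd.
- exact: lo0.
- by rewrite distrC ger0_norm ?subr_ge0 //; apply: le_trans hd; lra.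
- exact: lt_le_trans lo0 (le_trans loa ahi).
- by rewrite ger0_norm ?subr_ge0 //; apply: le_trans hd; lra.
Qed.

End ShortIntervals.

Section ScaledBound.
Variable R : realFieldType.

Lemma affine_gt0_near (k c a : R) : 0 < a * k + c ->
  exists2 d, 0 < d & forall b, `|b - a| <= d -> 0 < b * k + c.
Proof.
move=> ga; have e_gt0 : 0 < `|k| + 1 by rewrite ltr_pwDr.
exists ((a * k + c) / (`|k| + 1)) => [|b hb]; first exact: divr_gt0.
have small : `|(b - a) * k| < a * k + c.
  rewrite normrM; apply: (le_lt_trans (ler_wpM2r (normr_ge0 k) hb)).
  by rewrite -[ltRHS](divfK (lt0r_neq0 e_gt0)) ltr_pM2l ?divr_gt0 ?ltrDl.
have : - ((b - a) * k) <= `|(b - a) * k| by rewrite -normrN ler_norm.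
lra.
Qed.

Lemma scaled_bound_ltE (c x b : R) : 0 < b ->
  ((b - 1) / b * c < x) = (0 < b * (x - c) + c).
Proof.
move=> b_gt0; rewrite mulrAC ltr_pdivrMr // -subr_gt0.
by congr (0 < _); ring.
Qed.

Lemma scaled_bound_lt_near (c x a : R) : 0 < a -> (a - 1) / a * c < x ->
  exists2 d, 0 < d & forall b, 0 < b -> `|b - a| <= d -> (b - 1) / b * c < x.
Proof.
move=> a_gt0; rewrite scaled_bound_ltE // => /affine_gt0_near[d d_gt0 near_a].
by exists d => // b b_gt0 /near_a; rewrite scaled_bound_ltE.
Qed.

Lemma scaled_bound_le_max (c lo a hi : R) : 0 < lo -> lo <= a -> a <= hi ->
  (a - 1) / a * c <= Num.max ((lo - 1) / lo * c) ((hi - 1) / hi * c).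
Proof.
move=> lo_gt0 loa ahi; have a_gt0 := lt_le_trans lo_gt0 loa.
have hi_gt0 := lt_le_trans a_gt0 ahi.
have E (x : R) : 0 < x -> (x - 1) / x = 1 - x^-1.
  by move=> x_gt0; rewrite mulrBl divff ?gt_eqF // mul1r.
rewrite !E // le_max.
have : hi^-1 <= a^-1 by rewrite lef_pV2 ?posrE.
have : a^-1 <= lo^-1 by rewrite lef_pV2 ?posrE.
by case: (lerP 0 c) => c0 *; apply/orP; [right|left]; nra.
Qed.

End ScaledBound.

Section Receiver.
Variables (R : realType) (Om A : finType) (uR : A -> Om -> R) (mu0 : Om -> R).

Lemma dot_belief_subr alpha nu a a' :
  dot (belief mu0 alpha nu) (uR a) - dot (belief mu0 alpha nu) (uR a') =
  (1 - alpha) * dot (du uR a a') mu0 + alpha * dot (du uR a a') nu.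
Proof.
rewrite /dot -sumrB !mulr_sumr -big_split; apply: eq_bigr => w _.
by rewrite /belief /du /=; ring.
Qed.

Lemma unique_BR_beliefE alpha nu a : 0 < alpha ->
  unique_BR uR (belief mu0 alpha nu) a <->
  (forall a', a' != a -> bnd uR mu0 a a' alpha < dot (du uR a a') nu).
Proof.
move=> alpha_gt0.
have pref a' : (dot (belief mu0 alpha nu) (uR a') < dot (belief mu0 alpha nu) (uR a))
    = (bnd uR mu0 a a' alpha < dot (du uR a a') nu).
  by rewrite /bnd scaled_bound_ltE // -subr_gt0 dot_belief_subr; congr (0 < _); ring.
by split=> BR a' /BR; rewrite pref.
Qed.

Lemma bnd_le_bndJ lo alpha hi a a' : 0 < lo -> lo <= alpha -> alpha <= hi ->
  bnd uR mu0 a a' alpha <= bndJ uR mu0 a a' lo hi.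
Proof. exact: scaled_bound_le_max. Qed.

Lemma bnd_unmovable a a' alpha : ~~ movable uR mu0 a a' -> bnd uR mu0 a a' alpha = 0.
Proof. by rewrite /movable negbK => /eqP c0; rewrite /bnd c0 mulr0. Qed.

Lemma bndJ_lt_short alpha a a' x : 0 < alpha -> bnd uR mu0 a a' alpha < x ->
  short_intervals alpha (fun lo hi => bndJ uR mu0 a a' lo hi < x).
Proof.
move=> alpha_gt0 /(scaled_bound_lt_near alpha_gt0)/short_intervals_near.
by apply: short_intervalsS => lo hi [? ?]; rewrite gt_max; apply/andP.
Qed.

Lemma regionJ_region lo alpha hi a nu : 0 < lo -> lo <= alpha -> alpha <= hi ->
  regionJ uR mu0 lo hi a nu -> region uR mu0 alpha a nu.
Proof.
move=> lo0 loal alhi [nu_simplex IC]; split=> // a' a'a.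
exact: le_trans (bnd_le_bndJ _ _ lo0 loal alhi) (IC a' a'a).
Qed.

Lemma intIC_A_rel lo alpha hi a nu : 0 < lo -> lo <= alpha -> alpha <= hi ->
  intIC uR mu0 lo hi a nu -> A_rel uR mu0 alpha a.
Proof.
move=> lo0 loal alhi [nu_simplex IC]; exists nu; split=> //.
apply/unique_BR_beliefE; first exact: lt_le_trans lo0 loal.
by move=> a' a'a; exact: le_lt_trans (bnd_le_bndJ _ _ lo0 loal alhi) (IC a' a'a).
Qed.

Lemma intIC_short alpha a : 0 < alpha -> A_rel uR mu0 alpha a ->
  short_intervals alpha (fun lo hi => exists nu, intIC uR mu0 lo hi a nu).
Proof.
move=> alpha_gt0 [nu [nu_simplex /(unique_BR_beliefE _ _ alpha_gt0) BR]].
have : short_intervals alpha (fun lo hi =>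
    forall a', a' != a -> bndJ uR mu0 a a' lo hi < dot (du uR a a') nu).
  apply: short_intervals_forall => a'; have [->|a'a] := eqVneq a' a.
    exact: short_intervalsT.
  by apply: short_intervalsS (bndJ_lt_short alpha_gt0 (BR a' a'a)) => lo hi ? _.
by apply: short_intervalsS => lo hi IC; exists nu.
Qed.

Lemma regionJ_short alpha a nu : 0 < alpha -> region uR mu0 alpha a nu ->
  (forall a', a' != a -> movable uR mu0 a a' -> dot (du uR a a') nu != bnd uR mu0 a a' alpha) ->
  short_intervals alpha (fun lo hi => regionJ uR mu0 lo hi a nu).
Proof.
move=> alpha_gt0 [nu_simplex IC] slack.
have : short_intervals alpha (fun lo hi =>
    forall a', a' != a -> bndJ uR mu0 a a' lo hi <= dot (du uR a a') nu).
  apply: short_intervals_forall => a'; have [->|a'a] := eqVneq a' a.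
    exact: short_intervalsT.
  have [mv|unmv] := boolP (movable uR mu0 a a').
    have strict : bnd uR mu0 a a' alpha < dot (du uR a a') nu.
      by rewrite lt_neqAle eq_sym slack ?IC.
    by apply: short_intervalsS (bndJ_lt_short alpha_gt0 strict) => lo hi /ltW.
  apply: short_intervalsT => lo hi _.
  by rewrite /bndJ !bnd_unmovable // maxxx -(bnd_unmovable alpha unmv) IC.
by apply: short_intervalsS => lo hi IC'; split.
Qed.

Lemma feasible_safe_true lo alpha hi s : 0 < lo -> lo <= alpha -> alpha <= hi ->
  feasible_safe uR mu0 lo hi s -> feasible_true uR mu0 alpha s.
Proof.
move=> lo0 loal alhi [s_scheme s_safe]; split=> //.
apply: allProp_impl s_safe => t [t_region [nu t_IC]]; split.
  exact: intIC_A_rel lo0 loal alhi t_IC.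
exact: regionJ_region lo0 loal alhi t_region.
Qed.

Definition binding alpha (t : atom R Om A) : bool :=
  [exists a', (a' != act t) && movable uR mu0 (act t) a'
                && (dot (du uR (act t) a') (post t) == bnd uR mu0 (act t) a' alpha)].

Lemma atom_safe_short alpha t : 0 < alpha ->
  A_rel uR mu0 alpha (act t) -> region uR mu0 alpha (act t) (post t) ->
  (binding alpha t -> pr t = 0) ->
  short_intervals alpha (fun lo hi => (0 < pr t -> regionJ uR mu0 lo hi (act t) (post t)) /\
                                      exists nu, intIC uR mu0 lo hi (act t) nu).
Proof.
move=> alpha_gt0 t_rel t_region binding_null.
apply: short_intervalsI (intIC_short alpha_gt0 t_rel).
have [t_pos|t_null] := boolP (0 < pr t); last first.
  exact: short_intervalsT.
apply: short_intervalsS (regionJ_short alpha_gt0 t_region _) => [lo hi ? _ //|a' a't mv].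
apply/eqP => t_binds; move: t_pos; rewrite binding_null ?ltxx //.
by apply/fintype.existsP; exists a'; rewrite a't mv t_binds eqxx.
Qed.

Lemma sum_filter_pos_weight (F : atom R Om A -> R) s :
  allProp (fun t => 0 <= pr t) s ->
  \sum_(t <- [seq t <- s | 0 < pr t]) pr t * F t = \sum_(t <- s) pr t * F t.
Proof.
move=> s_ge0; apply: sum_filter_eq; apply: allProp_impl s_ge0 => t t_ge0 t_null.
suff -> : pr t = 0 by rewrite mul0r.
by apply/eqP; rewrite eq_le t_ge0 leNgt t_null.
Qed.

Lemma is_scheme_filter_pos s :
  @is_scheme _ _ A mu0 s -> is_scheme mu0 [seq t <- s | 0 < pr t].
Proof.
move=> [s_ge0 [s_sum1 s_bayes]]; split; last split.
- by apply: allProp_filter; apply: allProp_impl s_ge0 => t t_ge0 _.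
- have := sum_filter_pos_weight (fun=> 1) s_ge0.
  by rewrite !(eq_bigr (fun t => pr t) (fun t _ => mulr1 (pr t))) s_sum1.
- by move=> w; rewrite sum_filter_pos_weight.
Qed.

End Receiver.

Section Sender.
Variables (R : realType) (Om A : finType) (uR : A -> Om -> R) (mu0 : Om -> R) (uS : A -> Om -> R).

Definition payoff_bound : R := \sum_(a : A) \sum_(w : Om) `|uS a w|.

Lemma dot_simplex_le nu a : simplex nu -> dot nu (uS a) <= payoff_bound.
Proof.
move=> [nu_ge0 nu_sum1].
have uS_le w : uS a w <= payoff_bound.
  apply: le_trans (ler_norm _) _.
  rewrite /payoff_bound (bigD1 a) //= (bigD1 w) //= -addrA lerDl.
  by rewrite addr_ge0 ?sumr_ge0 // => *; rewrite ?sumr_ge0.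
apply: (@le_trans _ _ (\sum_w nu w * payoff_bound)).
  by apply: ler_sum => w _; rewrite ler_wpM2l.
by rewrite -mulr_suml nu_sum1 mul1r.
Qed.

Lemma value_le_mass s : allProp (fun t => 0 <= pr t /\ simplex (post t)) s ->
  value uS s <= payoff_bound * \sum_(t <- s) pr t.
Proof.
rewrite /value; elim: s => [|t s IH] /= => [_|[[t_ge0 t_simplex] /IH s_le]].
  by rewrite !big_nil mulr0.
rewrite !big_cons mulrDr lerD // [payoff_bound * _]mulrC ler_wpM2l //.
exact: dot_simplex_le.
Qed.

Lemma value_feasible_true_le alpha s : feasible_true uR mu0 alpha s -> value uS s <= payoff_bound.
Proof.
move=> [[s_ge0 [s_sum1 _]] s_feas].
rewrite -[payoff_bound]mulr1 -s_sum1; apply: value_le_mass.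
by apply: allProp_and s_ge0 (allProp_impl _ s_feas) => t [_ []].
Qed.

Lemma OPT_safe_le_OPT lo alpha hi : 0 < lo -> lo <= alpha -> alpha <= hi ->
  (exists s, feasible_safe uR mu0 lo hi s) -> OPT_safe uR mu0 uS lo hi <= OPT uR mu0 uS alpha.
Proof.
move=> lo0 loal alhi [s s_safe]; apply: sup_le.
- move=> _ [s' [s'_safe ->]]; apply/le_down.
  by exists s'; split=> //; exact: feasible_safe_true lo0 loal alhi s'_safe.
- by exists (value uS s), s.
- split.
    by exists (value uS s), s; split=> //; exact: feasible_safe_true lo0 loal alhi s_safe.
  by exists payoff_bound => _ [s' [s'_true ->]]; exact: value_feasible_true_le s'_true.
Qed.

Lemma value_le_OPT_safe lo hi s : 0 < lo -> lo <= hi ->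
  feasible_safe uR mu0 lo hi s -> value uS s <= OPT_safe uR mu0 uS lo hi.
Proof.
move=> lo0 lohi s_safe; apply: ub_le_sup; last by exists s.
exists payoff_bound => _ [s' [s'_safe ->]].
exact: value_feasible_true_le (feasible_safe_true lo0 (lexx lo) lohi s'_safe).
Qed.

Lemma value_filter_pos s : allProp (fun t => 0 <= pr t) s ->
  value uS [seq t <- s | 0 < pr t] = value uS s.
Proof. exact: sum_filter_pos_weight. Qed.

End Sender.

Theorem mainTheorem7 (R : realType) (Om A : finType) (mu0 : Om -> R)
  (uS uR : A -> Om -> R) (astar : R) (tau : seq (atom R Om A)) :
  full_support_prior mu0 ->
  unique_default uR mu0 ->
  0 < astar <= 1 ->
  true_bias_optimal uR mu0 uS astar tau ->
  P_info uR mu0 astar tau = 0 ->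
  exists delta : R, 0 < delta /\
    forall lo hi : R, 0 < lo -> lo <= astar -> astar <= hi -> hi <= 1 ->
      hi - lo <= delta ->
      allProp (fun t => 0 < pr t -> regionJ uR mu0 lo hi (act t) (post t)) tau /\
      feasible_safe uR mu0 lo hi [seq t <- tau | 0 < pr t] /\
      value uS tau = OPT_safe uR mu0 uS lo hi /\
      OPT_safe uR mu0 uS lo hi = OPT uR mu0 uS astar.
Proof.
(* Full support, the unique default action and the caps at 1 are not needed. *)
move=> _ _ /andP[astar_gt0 _] [[tau_scheme tau_feas] tau_opt] Pinfo0.
have binding_null := psumr_eq0_allProp (P := binding uR mu0 astar) tau_scheme.1 Pinfo0.
have [d d_gt0 tau_short] := short_intervals_allProp
  (allProp_impl (fun t '(conj (conj rel reg) null) => atom_safe_short astar_gt0 rel reg null)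
                (allProp_and tau_feas binding_null)).
exists d; split=> // lo hi lo_gt0 lo_astar astar_hi _ short.
have atoms := tau_short lo hi lo_gt0 lo_astar astar_hi short.
have safe : feasible_safe uR mu0 lo hi [seq t <- tau | 0 < pr t].
  split; first exact: is_scheme_filter_pos.
  by apply: allProp_filter; apply: allProp_impl atoms => t [reg IC] /reg.
have value_le : value uS tau <= OPT_safe uR mu0 uS lo hi.
  rewrite -value_filter_pos; last exact: tau_scheme.1.
  exact: value_le_OPT_safe lo_gt0 (le_trans lo_astar astar_hi) safe.
have OPT_le : OPT_safe uR mu0 uS lo hi <= value uS tau.
  rewrite tau_opt; apply: OPT_safe_le_OPT lo_gt0 lo_astar astar_hi _.
  by exists [seq t <- tau | 0 < pr t].
have value_eq : value uS tau = OPT_safe uR mu0 uS lo hi by apply/le_anti/andP.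
split; first by apply: allProp_impl atoms => t [].
by rewrite -value_eq.
Qed.
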